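(* Let $(G,M,\Delta)$ be a Garside structure and $(H,N,\delta)$ a parabolic substructure with $H\neq G$ and $H\ne\{1\}$. Put $\omega=\delta^{-1}\Delta$ and $\Phi(\alpha)=\Delta\alpha\Delta^{-1}$. For an integer $k\ge1$ let $d_k=\omega_1\omega_2\cdots\omega_k$, where $\omega_i=\Phi^{-i+1}(\omega)$ for $i\in\{1,\dots,k\}$. Then $\mathrm{diam}(\pi_H(d_k))\ge k$.
   Context: Let $G$ be a group and $M$ a submonoid with $M\cap M^{-1}=\{1\}$. Define $\alpha\le_L\beta$ iff $\alpha^{-1}\beta\in M$, and $\alpha\le_R\beta$ iff $\beta\alpha^{-1}\in M$. For $a\in M$ let $\mathrm{Div}_L(a)=\{b\in M: b\le_L a\}$, $\mathrm{Div}_R(a)=\{b\in M: b\le_R a\}$; $a$ is balanced if these coincide, and then $\mathrm{Div}(a)$ denotes this set. $M$ is Noetherian if each $a\in M$ admits an $n$ such that $a$ is not a product of more than $n$ non-trivial factors. A Garside structure $(G,M,\Delta)$: $\Delta\in M$ balanced, $M$ Noetherian, $\mathrm{Div}(\Delta)$ finite and generating $M$ as a monoid and $G$ as a group, $(G,\le_L)$ a lattice. A parabolic substructure $(H,N,\delta)$: $\delta\in M$ balanced, $H$ (resp. $N$) the subgroup (resp. submonoid) generated by $\mathrm{Div}(\delta)$, and $\mathrm{Div}(\delta)=\mathrm{Div}(\Delta)\cap N$. With $\mathcal S=\mathrm{Div}(\Delta)\setminus\{1\}$ and $\lg$ the word length w.r.t. $\mathcal S$: $d(\alpha,\beta)=\lg(\alpha^{-1}\beta)$;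 $d(\alpha,H)=\min_{\beta\in H}d(\alpha,\beta)$; $\pi_H(\alpha)=\{\beta\in H: d(\alpha,\beta)=d(\alpha,H)\}$; $\mathrm{diam}(X)=\max\{d(\alpha,\beta):\alpha,\beta\in X\}$. *)

From Stdlib Require Import List Arith Lia.
Import ListNotations.
Set Implicit Arguments.

Record Grp := {
  car :> Type;
  gmul : car -> car -> car;
  gone : car;
  ginv : car -> car;
  gmulA : forall x y z, gmul x (gmul y z) = gmul (gmul x y) z;
  gmul1l : forall x, gmul gone x = x;
  gmul1r : forall x, gmul x gone = x;
  gmulVl : forall x, gmul (ginv x) x = gone;
  gmulVr : forall x, gmul x (ginv x) = gone
}.

Section Defs.
Variable G : Grp.
Local Notation "x * y" := (gmul G x y).
Local Notation "1" := (gone G).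
Local Notation "x ^-1" := (ginv G x) (at level 2).

Definition gprod (l : list G) : G := fold_right (gmul G) 1 l.

Definition gen_monoid (X : G -> Prop) (a : G) : Prop :=
  exists l, Forall X l /\ gprod l = a.
Definition gen_group (X : G -> Prop) (a : G) : Prop :=
  exists l, Forall (fun x => X x \/ X (x^-1)) l /\ gprod l = a.

Definition submonoid (M : G -> Prop) : Prop :=
  M 1 /\ forall x y, M x -> M y -> M (x * y).

Definition leL (M : G -> Prop) (a b : G) : Prop := M (a^-1 * b).
Definition leR (M : G -> Prop) (a b : G) : Prop := M (b * a^-1).

Definition DivL (M : G -> Prop) (a : G) (b : G) : Prop := M b /\ leL M b a.
Definition DivR (M : G -> Prop) (a : G) (b : G) : Prop := M b /\ leR M b a.

Definition balanced (M : G -> Prop) (a : G) : Prop :=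
  M a /\ forall b, DivL M a b <-> DivR M a b.

(* Div(a) for balanced a *)
Definition Div (M : G -> Prop) (a : G) : G -> Prop := DivL M a.

Definition noetherian (M : G -> Prop) : Prop :=
  forall a, M a -> exists n : nat, forall l : list G,
    Forall (fun x => M x /\ x <> 1) l -> gprod l = a -> length l <= n.

Definition finite_set (X : G -> Prop) : Prop :=
  exists l : list G, forall x, X x <-> In x l.

Definition is_lattice (le : G -> G -> Prop) : Prop :=
  (forall a b, exists j, le a j /\ le b j /\
      forall c, le a c -> le b c -> le j c) /\
  (forall a b, exists m, le m a /\ le m b /\
      forall c, le c a -> le c b -> le c m).

Definition garside (M : G -> Prop) (Delta : G) : Prop :=
  submonoid M /\
  (forall x, M x -> M (x^-1) -> x = 1) /\
  balanced M Delta /\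
  noetherian M /\
  finite_set (Div M Delta) /\
  (forall a, M a <-> gen_monoid (Div M Delta) a) /\
  (forall g, gen_group (Div M Delta) g) /\
  is_lattice (leL M).

(* parabolic substructure (H, N, delta): H and N are the subgroup / submonoid
   generated by Div(delta) (see Hsub, Nsub below) *)
Definition Hsub (M : G -> Prop) (delta : G) : G -> Prop := gen_group (Div M delta).
Definition Nsub (M : G -> Prop) (delta : G) : G -> Prop := gen_monoid (Div M delta).

Definition parabolic (M : G -> Prop) (Delta delta : G) : Prop :=
  balanced M delta /\
  forall x, Div M delta x <-> (Div M Delta x /\ Nsub M delta x).

Definition Sgen (M : G -> Prop) (Delta : G) (x : G) : Prop :=
  Div M Delta x /\ x <> 1.

Definition wordlen_le (S : G -> Prop) (a : G) (n : nat) : Prop :=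
  exists l, length l <= n /\ Forall (fun x => S x \/ S (x^-1)) l /\ gprod l = a.

Definition is_lg (S : G -> Prop) (a : G) (n : nat) : Prop :=
  wordlen_le S a n /\ forall m, wordlen_le S a m -> n <= m.

Definition is_dist (S : G -> Prop) (a b : G) (n : nat) : Prop :=
  is_lg S (a^-1 * b) n.

Definition proj (S H : G -> Prop) (alpha : G) (beta : G) : Prop :=
  H beta /\ forall beta', H beta' -> forall n m,
    is_dist S alpha beta n -> is_dist S alpha beta' m -> n <= m.

Definition diam_ge (S X : G -> Prop) (k : nat) : Prop :=
  exists a b, X a /\ X b /\ forall n, is_dist S a b n -> k <= n.

Definition Phi_inv (Delta a : G) : G := Delta^-1 * a * Delta.

Definition omega_i (Delta delta : G) (i : nat) : G :=
  Nat.iter (i - 1) (Phi_inv Delta) (delta^-1 * Delta).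

Definition d_k (Delta delta : G) (k : nat) : G :=
  gprod (map (omega_i Delta delta) (seq 1 k)).

End Defs.
Arguments garside {G}.
Arguments parabolic {G}.
Arguments Hsub {G}.
Arguments Sgen {G}.
Arguments proj {G}.
Arguments diam_ge {G}.
Arguments d_k {G}.

(* Write d = delta, D = Delta. Then d_k = d^-k D^k, so d^-k and 1 are both within
   distance k of d_k (via the words D^-k and the inverted product of the omega_i).
   Conversely a word of length n lies between D^-n and D^n in the prefix order, so a
   point b of H at distance n < k from d_k would give D <= d^k b. But d and d^-1 D have
   trivial meet, which makes every common prefix of D and an element of N a prefix of d;
   writing elements of H as d^-r x with x in N, this forces d = D, i.e. H = G. Hence
   d^-k and 1 lie in pi_H(d_k), and their distance, the length of d^k, is at least k
   because d^k <= D^j forces k <= j when d <> 1. *)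

From Stdlib Require Import List Arith Lia Classical.
Import ListNotations.

Local Notation "x * y" := (gmul _ x y).
Local Notation "x ^-1" := (ginv _ x) (at level 2, left associativity, format "x ^-1").

Lemma mulKg {G : Grp} (x y : G) : x^-1 * (x * y) = y.
Proof. now rewrite gmulA, gmulVl, gmul1l. Qed.

Lemma mulKVg {G : Grp} (x y : G) : x * (x^-1 * y) = y.
Proof. now rewrite gmulA, gmulVr, gmul1l. Qed.

Lemma invg_unique {G : Grp} (x y : G) : x * y = gone G -> y = x^-1.
Proof. intros Hxy. now rewrite <- (gmul1r _ x^-1), <- Hxy, mulKg. Qed.

Lemma invgM {G : Grp} (x y : G) : (x * y)^-1 = y^-1 * x^-1.
Proof. symmetry; apply invg_unique. now rewrite <- gmulA, mulKVg, gmulVr. Qed.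

Lemma invgK {G : Grp} (x : G) : x^-1^-1 = x.
Proof. symmetry; apply invg_unique, gmulVl. Qed.

Lemma invg1 {G : Grp} : (gone G)^-1 = gone G.
Proof. symmetry; apply invg_unique, gmul1l. Qed.

Lemma gprod_app {G : Grp} (l1 l2 : list G) : gprod G (l1 ++ l2) = gprod G l1 * gprod G l2.
Proof.
  induction l1 as [|x l IH]; simpl; [now rewrite gmul1l | now rewrite IH, gmulA].
Qed.

Definition gpow {G : Grp} (a : G) (n : nat) : G := gprod G (repeat a n).

Lemma gpow0 {G : Grp} (a : G) : gpow a 0 = gone G.
Proof. reflexivity. Qed.

Lemma gpowS {G : Grp} (a : G) n : gpow a (S n) = a * gpow a n.
Proof. reflexivity. Qed.

Lemma gpow1 {G : Grp} (a : G) : gpow a 1 = a.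
Proof. apply gmul1r. Qed.

Lemma gpowD {G : Grp} (a : G) m n : gpow a (m + n) = gpow a m * gpow a n.
Proof. unfold gpow. now rewrite repeat_app, gprod_app. Qed.

Lemma gpowSr {G : Grp} (a : G) n : gpow a (S n) = gpow a n * a.
Proof. now rewrite <- Nat.add_1_r, gpowD, gpow1. Qed.

Lemma gpowV {G : Grp} (a : G) n : gpow a^-1 n = (gpow a n)^-1.
Proof.
  induction n as [|n IH].
  - symmetry; apply invg1.
  - change (a^-1 * gpow a^-1 n = (gpow a (S n))^-1).
    now rewrite IH, gpowSr, invgM.
Qed.

Ltac gsimpl := repeat progress rewrite ?invgM, ?invgK, ?invg1, ?gpow0, ?gmul1l, ?gmul1r,
  <- ?gmulA, ?mulKg, ?mulKVg, ?gmulVl, ?gmulVr.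
Tactic Notation "gsimpl" "in" hyp(H) := repeat progress rewrite ?invgM, ?invgK, ?invg1,
  ?gpow0, ?gmul1l, ?gmul1r, <- ?gmulA, ?mulKg, ?mulKVg, ?gmulVl, ?gmulVr in H.

Lemma iter_Phi_inv {G : Grp} (D x : G) n :
  Nat.iter n (Phi_inv G D) x = (gpow D n)^-1 * x * gpow D n.
Proof.
  induction n as [|n IH].
  - now gsimpl.
  - rewrite Nat.iter_succ, IH, (gpowSr D n). unfold Phi_inv. now gsimpl.
Qed.

Lemma d_k_eq {G : Grp} (D d : G) k : d_k D d k = (gpow d k)^-1 * gpow D k.
Proof.
  unfold d_k. induction k as [|k IH].
  - simpl. now gsimpl.
  - rewrite seq_S, map_app, gprod_app, IH. simpl.
    unfold omega_i. replace (S k - 1) with k by lia.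
    rewrite iter_Phi_inv, (gpowS d k), (gpowS D k). now gsimpl.
Qed.

Section Garside.
Context {G : Grp} {M : G -> Prop}.
Local Notation "1" := (gone G).
Local Notation "a <=L b" := (leL G M a b) (at level 70).

Lemma leL_mull c {a b : G} : a <=L b -> c * a <=L c * b.
Proof. unfold leL. now gsimpl. Qed.

Lemma Hsub_mul {d a b : G} : Hsub M d a -> Hsub M d b -> Hsub M d (a * b).
Proof.
  intros [l1 [F1 <-]] [l2 [F2 <-]]. exists (l1 ++ l2).
  split; [now apply Forall_app | apply gprod_app].
Qed.

Lemma proj_of_wordlen {S H : G -> Prop} {alpha beta : G} {k : nat} :
  H beta -> wordlen_le G S (alpha^-1 * beta) k ->
  (forall beta' n, H beta' -> wordlen_le G S (alpha^-1 * beta') n -> k <= n) ->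
  proj S H alpha beta.
Proof.
  intros Hbeta Hk Hlow. split; [exact Hbeta|].
  intros beta' Hbeta' n m [_ Hmin] [Hm _].
  specialize (Hmin k Hk). specialize (Hlow beta' m Hbeta' Hm). lia.
Qed.

Lemma wordlen_gprodV D l :
  Forall (Div G M D) l -> wordlen_le G (Sgen M D) (gprod G l)^-1 (length l).
Proof.
  induction 1 as [|s l Hs _ [w [Hlen [Hw Hprod]]]].
  - exists []. repeat split; simpl; auto. now rewrite invg1.
  - simpl. destruct (classic (s = 1)) as [-> | Hs1].
    + exists w. repeat split; auto. now rewrite Hprod, gmul1l.
    + exists (w ++ [s^-1]). rewrite length_app, gprod_app, Hprod. simpl. repeat split.
      * lia.
      * apply Forall_app. split; [exact Hw|]. constructor; [|constructor].
        right. rewrite invgK. now split.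
      * now gsimpl.
Qed.

Lemma Nsub_cons {a s x : G} : Div G M a s -> Nsub G M a x -> Nsub G M a (s * x).
Proof. intros Hs [l [Hl <-]]. exists (s :: l). split; [now constructor | reflexivity]. Qed.

Hypothesis HM : submonoid G M.

Lemma M_one : M 1.
Proof. exact (proj1 HM). Qed.

Lemma M_mul {x y : G} : M x -> M y -> M (x * y).
Proof. exact (proj2 HM x y). Qed.

Hypothesis Hanti : forall x, M x -> M x^-1 -> x = 1.

Lemma Hsub_one {h : G} : Hsub M 1 h -> h = 1.
Proof.
  assert (Div1 : forall x, Div G M 1 x -> x = 1).
  { intros x [Mx Hx]. unfold leL in Hx. rewrite gmul1r in Hx. exact (Hanti _ Mx Hx). }
  intros [l [Hl <-]]. induction Hl as [|x l [Hx | Hx] _ IH]; simpl; [reflexivity | |].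
  - now rewrite IH, (Div1 _ Hx), gmul1r.
  - rewrite IH, gmul1r, <- (invgK x), (Div1 _ Hx). apply invg1.
Qed.

Lemma leL_refl a : a <=L a.
Proof. unfold leL. rewrite gmulVl. exact M_one. Qed.

Lemma leL_trans {a b c : G} : a <=L b -> b <=L c -> a <=L c.
Proof.
  unfold leL. intros Hab Hbc. pose proof (M_mul Hab Hbc) as Hac. now gsimpl in Hac.
Qed.

Lemma M_gprod l : Forall M l -> M (gprod G l).
Proof. induction 1; simpl; [exact M_one | now apply M_mul]. Qed.

Lemma M_gpow {a : G} n : M a -> M (gpow a n).
Proof. intros Ha. apply M_gprod, Forall_forall. now intros x ->%repeat_spec. Qed.

Lemma leL_gpow_mono {a : G} {m n : nat} : M a -> m <= n -> gpow a m <=L gpow a n.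
Proof.
  intros Ha Hmn. unfold leL. replace n with (m + (n - m)) by lia.
  rewrite gpowD, mulKg. now apply M_gpow.
Qed.

Lemma leL_gpowV_mono {a : G} {m n : nat} : M a -> m <= n -> (gpow a n)^-1 <=L (gpow a m)^-1.
Proof.
  intros Ha Hmn. unfold leL. replace n with ((n - m) + m) by lia.
  rewrite gpowD. gsimpl. now apply M_gpow.
Qed.

Section Balanced.
Context {a : G}.
Hypothesis Ha : balanced G M a.

Lemma Div_refl : Div G M a a.
Proof. split; [exact (proj1 Ha) | apply leL_refl]. Qed.

Lemma Div_lcompl {s : G} : Div G M a s -> Div G M a (a * s^-1).
Proof.
  intros Hs. destruct (proj1 (proj2 Ha s) Hs) as [Ms Rs].
  split; [exact Rs|]. unfold leL. now gsimpl.
Qed.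

Lemma Div_rcompl {s : G} : Div G M a s -> Div G M a (s^-1 * a).
Proof.
  intros [Ms Ls]. apply (proj2 Ha). split; [exact Ls|]. unfold leR. now gsimpl.
Qed.

Lemma Div_conj {s : G} : Div G M a s -> Div G M a (a * s * a^-1).
Proof. intros Hs. pose proof (Div_lcompl (Div_lcompl Hs)) as H. gsimpl in H. now gsimpl. Qed.

Lemma Div_conjV {s : G} : Div G M a s -> Div G M a (a^-1 * s * a).
Proof. intros Hs. pose proof (Div_rcompl (Div_rcompl Hs)) as H. gsimpl in H. now gsimpl. Qed.

Lemma Div_conj_gpow {n : nat} {s : G} : Div G M a s -> Div G M a (gpow a n * s * (gpow a n)^-1).
Proof.
  intros Hs. induction n as [|n IH]; [now gsimpl|].
  pose proof (Div_conj IH) as H. rewrite gpowS. gsimpl in H. now gsimpl.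
Qed.

Lemma Div_conjV_gpow {n : nat} {s : G} : Div G M a s -> Div G M a ((gpow a n)^-1 * s * gpow a n).
Proof.
  intros Hs. induction n as [|n IH]; [now gsimpl|].
  pose proof (Div_conjV IH) as H. rewrite gpowSr. gsimpl in H. now gsimpl.
Qed.

Lemma Div_iter_Phi_inv n x : Div G M a x -> Div G M a (Nat.iter n (Phi_inv G a) x).
Proof. intros Hx. rewrite iter_Phi_inv. now apply Div_conjV_gpow. Qed.

Lemma Nsub_gpow n : Nsub G M a (gpow a n).
Proof.
  exists (repeat a n). split; [|reflexivity].
  apply Forall_forall. intros x ->%repeat_spec. exact Div_refl.
Qed.

Lemma Hsub_gpow n : Hsub M a (gpow a n).
Proof.
  exists (repeat a n). split; [|reflexivity].
  apply Forall_forall. intros x ->%repeat_spec. left. exact Div_refl.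
Qed.

Lemma Hsub_gpowV n : Hsub M a (gpow a n)^-1.
Proof.
  exists (repeat a^-1 n). split; [|apply gpowV].
  apply Forall_forall. intros x ->%repeat_spec. right. rewrite invgK. exact Div_refl.
Qed.

(* Letters move past [a^-r] because conjugation by powers of [a] permutes [Div a]; an
   inverse letter [y] (with [y^-1] in [Div a]) is rewritten as [a^-1 (a y)], [a y] in [Div a]. *)
Lemma Hsub_decomp h : Hsub M a h -> exists r x, Nsub G M a x /\ h = (gpow a r)^-1 * x.
Proof.
  intros [l [Hl <-]]. induction Hl as [|y l Hy _ [r [x [Hx Hl]]]].
  - exists 0, 1. split; [exists []; split; auto | now gsimpl].
  - simpl. rewrite Hl. destruct Hy as [Hy | Hy].
    + exists r, (gpow a r * y * (gpow a r)^-1 * x). split.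
      * apply (Nsub_cons (Div_conj_gpow Hy) Hx).
      * now gsimpl.
    + pose proof (Div_lcompl Hy) as Hay. rewrite invgK in Hay.
      exists (S r), (gpow a r * (a * y) * (gpow a r)^-1 * x). split.
      * apply (Nsub_cons (Div_conj_gpow Hay) Hx).
      * rewrite gpowSr. now gsimpl.
Qed.

End Balanced.

Section Generated.
Context {D : G}.
Hypothesis HD : balanced G M D.
Hypothesis HMgen : forall m, M m <-> gen_monoid G (Div G M D) m.

Lemma M_morph_closed (f : G -> G) :
  (forall x y, f (x * y) = f x * f y) -> f 1 = 1 ->
  (forall s, Div G M D s -> Div G M D (f s)) ->
  forall m, M m -> M (f m).
Proof.
  intros Hmul H1 Hdiv m [l [Hl <-]]%HMgen. apply HMgen.
  exists (map f l). split.
  - apply Forall_map. eapply Forall_impl; [exact Hdiv | exact Hl].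
  - induction l as [|s l IH]; simpl; [now rewrite H1|].
    inversion_clear Hl. now rewrite Hmul, IH.
Qed.

Lemma M_conj_gpow n {m : G} : M m -> M (gpow D n * m * (gpow D n)^-1).
Proof.
  apply (M_morph_closed (fun x => gpow D n * x * (gpow D n)^-1)).
  - intros x y. now gsimpl.
  - now gsimpl.
  - intros s. exact (Div_conj_gpow HD).
Qed.

Lemma M_conjV_gpow n {m : G} : M m -> M ((gpow D n)^-1 * m * gpow D n).
Proof.
  apply (M_morph_closed (fun x => (gpow D n)^-1 * x * gpow D n)).
  - intros x y. now gsimpl.
  - now gsimpl.
  - intros s. exact (Div_conjV_gpow HD).
Qed.

Lemma leL_mulr_gpow n {a b : G} : a <=L b -> a * gpow D n <=L b * gpow D n.
Proof. unfold leL. intros Hab. pose proof (M_conjV_gpow n Hab) as H. gsimpl in H. now gsimpl. Qed.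

Lemma leL_mulr_gpowV n {a b : G} : a <=L b -> a * (gpow D n)^-1 <=L b * (gpow D n)^-1.
Proof. unfold leL. intros Hab. pose proof (M_conj_gpow n Hab) as H. gsimpl in H. now gsimpl. Qed.

Lemma letter_bounds {x : G} : Div G M D x \/ Div G M D x^-1 -> x <=L D /\ D^-1 <=L x.
Proof.
  unfold leL. rewrite invgK. intros [[Mx Lx] | Hx].
  - split; [exact Lx | exact (M_mul (proj1 HD) Mx)].
  - destruct (proj1 (proj2 HD _) Hx) as [Mx Rx]. unfold leR in Rx. rewrite invgK in Rx.
    split; [exact (M_mul Mx (proj1 HD)) | exact Rx].
Qed.

Lemma word_bounds w : Forall (fun x => Div G M D x \/ Div G M D x^-1) w ->
  gprod G w <=L gpow D (length w) /\ (gpow D (length w))^-1 <=L gprod G w.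
Proof.
  induction 1 as [|x w Hx _ [IHup IHlow]]; simpl.
  - rewrite gpow0, invg1. split; apply leL_refl.
  - destruct (letter_bounds Hx) as [Hup Hlow]. split.
    + rewrite gpowS. apply (leL_trans (leL_mull x IHup)).
      now apply leL_mulr_gpow.
    + rewrite gpowSr, invgM. refine (leL_trans _ (leL_mull x IHlow)).
      now apply leL_mulr_gpowV.
Qed.

Lemma wordlen_bounds g n : wordlen_le G (Sgen M D) g n ->
  g <=L gpow D n /\ (gpow D n)^-1 <=L g.
Proof.
  intros [w [Hlen [Hw <-]]].
  assert (Hw' : Forall (fun x => Div G M D x \/ Div G M D x^-1) w).
  { eapply Forall_impl; [|exact Hw]. intros x [[Hx _] | [Hx _]]; auto. }
  destruct (word_bounds _ Hw') as [Hup Hlow]. split.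
  - exact (leL_trans Hup (leL_gpow_mono (proj1 HD) Hlen)).
  - exact (leL_trans (leL_gpowV_mono (proj1 HD) Hlen) Hlow).
Qed.

Lemma wordlen_d_k_gpowV d k : wordlen_le G (Sgen M D) ((d_k D d k)^-1 * (gpow d k)^-1) k.
Proof.
  rewrite d_k_eq. gsimpl. pose proof (wordlen_gprodV D (repeat D k)) as H.
  rewrite repeat_length in H. apply H, Forall_forall.
  intros x ->%repeat_spec. exact (Div_refl HD).
Qed.

Section Parabolic.
Context {d : G}.
Hypothesis Hd : balanced G M d.
Hypothesis HdD : Div G M D d.
Hypothesis Hpar : forall x, Div G M d x <-> Div G M D x /\ Nsub G M d x.
Hypothesis Hmeet : forall a b, exists m, m <=L a /\ m <=L b /\
  forall c, c <=L a -> c <=L b -> c <=L m.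

(* For the meet [u] of [d] and [d^-1 D], [d u] divides [D] and lies in [N], hence divides
   [d], which forces [u = 1]. *)
Lemma delta_omega_coprime y : y <=L d -> y <=L d^-1 * D -> y <=L 1.
Proof.
  intros Hy1 Hy2. destruct (Hmeet d (d^-1 * D)) as [u [Hu1 [Hu2 Hmax]]].
  apply (leL_trans (Hmax y Hy1 Hy2)).
  assert (Mu : M u).
  { assert (H : 1 <=L u).
    { apply Hmax; unfold leL; gsimpl; [exact (proj1 Hd) | exact (proj2 HdD)]. }
    unfold leL in H. now gsimpl in H. }
  assert (Hdu : Div G M d (d * u)).
  { apply Hpar. split.
    - split; [exact (M_mul (proj1 Hd) Mu)|]. unfold leL in *. now gsimpl.
    - apply (Nsub_cons (Div_refl Hd)). exists [u]. split; [|apply gmul1r].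
      constructor; [now split | constructor]. }
  destruct Hdu as [_ H]. unfold leL in *. gsimpl. now gsimpl in H.
Qed.

Lemma leL_delta_of_Nsub {x z : G} : Nsub G M d x -> z <=L x -> z <=L D -> z <=L d.
Proof.
  intros [l [Hl <-]]. revert z. induction Hl as [|s l Hs _ IH]; intros z Hzx HzD; simpl in Hzx.
  - apply (leL_trans Hzx). unfold leL. gsimpl. exact (proj1 Hd).
  - (* [z <= s d <= d d], and coprimality of [d] and [d^-1 D] brings this down to [z <= d]. *)
    assert (HzsD : z <=L s * D).
    { apply (leL_trans HzD). unfold leL.
      pose proof (M_conjV_gpow 1 (proj1 Hs)) as H. rewrite gpow1 in H. now gsimpl in H. }
    assert (Hsz : s^-1 * z <=L d).
    { apply IH; unfold leL in *; now gsimpl. }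
    assert (Hsd : s * d <=L d * d).
    { pose proof (Div_conjV Hd (Div_rcompl Hd Hs)) as [H _].
      unfold leL. gsimpl. now gsimpl in H. }
    assert (Hzdd : z <=L d * d).
    { refine (leL_trans _ Hsd). pose proof (leL_mull s Hsz) as H. now gsimpl in H. }
    assert (H : d^-1 * z <=L 1).
    { apply delta_omega_coprime; [|now apply leL_mull].
      pose proof (leL_mull d^-1 Hzdd) as H. now gsimpl in H. }
    pose proof (leL_mull d H) as H'. now gsimpl in H'.
Qed.

Lemma Delta_leL_Hsub_eq {h : G} : Hsub M d h -> D <=L h -> d = D.
Proof.
  intros [r [x [Hx ->]]]%(Hsub_decomp Hd) HDh.
  assert (HDx : D <=L x).
  { pose proof (M_conjV_gpow 1 (M_gpow r (proj1 Hd))) as H. rewrite gpow1 in H.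
    pose proof (M_mul H HDh) as H'. unfold leL. now gsimpl in H'. }
  pose proof (leL_delta_of_Nsub Hx HDx (leL_refl D)) as HDd.
  assert (E : d^-1 * D = 1) by (apply Hanti; [exact (proj2 HdD) | now gsimpl]).
  apply invg_unique in E. now rewrite invgK in E.
Qed.

Hypothesis Hd1 : d <> 1.

Lemma le_of_gpow_leL_gpow {k j : nat} : gpow d k <=L gpow D j -> k <= j.
Proof.
  revert j. induction k as [|k IH]; intros j Hkj; [lia|].
  destruct j as [|j].
  - exfalso. apply Hd1, Hanti; [exact (proj1 Hd)|].
    assert (H : d <=L 1).
    { refine (leL_trans _ Hkj). rewrite <- (gpow1 d) at 1.
      apply (leL_gpow_mono (proj1 Hd)). lia. }
    unfold leL in H. now gsimpl in H.
  - set (z := gpow d (S k) * (gpow D j)^-1).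
    assert (Hzd : z <=L d).
    { apply (leL_delta_of_Nsub (Nsub_gpow Hd (S k))).
      - unfold z, leL. gsimpl. exact (M_gpow j (proj1 HD)).
      - unfold z, leL. unfold leL in Hkj. rewrite (gpowS D j) in Hkj.
        pose proof (M_conj_gpow j Hkj) as H. gsimpl. now gsimpl in H. }
    apply le_n_S, IH. unfold z, leL in Hzd. rewrite gpowS in Hzd. gsimpl in Hzd.
    pose proof (M_conjV_gpow j Hzd) as H. unfold leL. now gsimpl in H.
Qed.

Lemma wordlen_gpow_delta_ge {k n : nat} : wordlen_le G (Sgen M D) (gpow d k) n -> k <= n.
Proof. intros [Hup _]%wordlen_bounds. exact (le_of_gpow_leL_gpow Hup). Qed.

Hypothesis HdD_neq : d <> D.

(* If a word of length [n < k] reached [b] in [H] from [d_k = d^-k D^k], then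
   [D <= D^(k-n) <= d^k b], which is impossible in [H] unless [d = D]. *)
Lemma wordlen_d_k_Hsub_ge k b n : Hsub M d b ->
  wordlen_le G (Sgen M D) ((d_k D d k)^-1 * b) n -> k <= n.
Proof.
  intros Hb [_ Hlow]%wordlen_bounds.
  destruct (le_lt_dec k n) as [Hkn | Hnk]; [exact Hkn|]. exfalso.
  apply HdD_neq, (Delta_leL_Hsub_eq (Hsub_mul (Hsub_gpow Hd k) Hb)).
  rewrite d_k_eq in Hlow. pose proof (leL_mull (gpow D k) Hlow) as H.
  replace k with ((k - n) + n) in H at 1 by lia. rewrite gpowD in H. gsimpl in H.
  refine (leL_trans _ H). rewrite <- (gpow1 D) at 1.
  apply (leL_gpow_mono (proj1 HD)). lia.
Qed.

Lemma omega_i_Div i : Div G M D (omega_i G D d i).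
Proof. apply (Div_iter_Phi_inv HD), (Div_rcompl HD HdD). Qed.

Lemma wordlen_d_k_inv k : wordlen_le G (Sgen M D) (d_k D d k)^-1 k.
Proof.
  pose proof (wordlen_gprodV D (map (omega_i G D d) (seq 1 k))) as H.
  rewrite length_map, length_seq in H. apply H, Forall_forall.
  intros x [i [<- _]]%in_map_iff. apply omega_i_Div.
Qed.

End Parabolic.
End Generated.
End Garside.

Theorem lemma5p3 (G : Grp) (M : G -> Prop) (Delta delta : G) (k : nat) :
  garside M Delta ->
  parabolic M Delta delta ->
  (exists g : G, ~ Hsub M delta g) ->
  (exists h : G, Hsub M delta h /\ h <> gone G) ->
  1 <= k ->
  diam_ge (Sgen M Delta) (proj (Sgen M Delta) (Hsub M delta) (d_k Delta delta k)) k.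
Proof.
  intros [HM [Hanti [HD [_ [_ [HMgen [HGgen [_ Hmeet]]]]]]]] [Hd Hpar] [g Hg] [h [Hh Hh1]] _.
  assert (HdD : Div G M Delta delta) by apply (Hpar delta), (Div_refl HM Hd).
  assert (Hd1 : delta <> gone G) by (intros ->; exact (Hh1 (Hsub_one Hanti Hh))).
  assert (HdD_neq : delta <> Delta) by (intros ->; exact (Hg (HGgen g))).
  pose proof (wordlen_d_k_Hsub_ge HM Hanti HD HMgen Hd HdD Hpar Hmeet HdD_neq k) as Hlow.
  exists (gpow delta k)^-1, (gone G). split; [|split].
  - exact (proj_of_wordlen (Hsub_gpowV HM Hd k) (wordlen_d_k_gpowV HM HD delta k) Hlow).
  - refine (proj_of_wordlen (Hsub_gpow HM Hd 0) _ Hlow).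
    rewrite gpow0, gmul1r. exact (wordlen_d_k_inv HD HdD k).
  - intros n [Hn _]. rewrite invgK, gmul1r in Hn.
    exact (wordlen_gpow_delta_ge HM Hanti HD HMgen Hd HdD Hpar Hmeet Hd1 Hn).
Qed.
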